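(* Let $G$ be a pro-oligomorphic group and $U$ an open subgroup. Let $n(U)$ be the supremum of the set of $n\in\mathbf{N}$ for which there is a strict chain of subgroups $U=U_0\subsetneq U_1\subsetneq\cdots\subsetneq U_n\subset G$. Then $n(U)$ is finite; in fact $n(U)$ is at most the cardinality of the double coset space $U\backslash G/U$.
   Context: A pro-oligomorphic group is a topological group that is Hausdorff, non-archimedean (open subgroups form a neighborhood basis of the identity), and Roelcke pre-compact (for any open subgroups $U,V$, the double coset space $U\backslash G/V$ is finite). *)

From mathcomp Require Import all_boot all_order.
From mathcomp Require Import all_classical all_analysis.
Set Implicit Arguments. Unset Strict Implicit. Unset Printing Implicit Defensive.
Local Open Scope classical_set_scope.

Definition group_law {G : Type} (mul : G -> G -> G) (inv : G -> G) (e : G) :=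
  [/\ (forall x y z, mul x (mul y z) = mul (mul x y) z),
      (forall x, mul e x = x /\ mul x e = x) &
      (forall x, mul (inv x) x = e /\ mul x (inv x) = e)].

Definition topological_group {G : topologicalType}
  (mul : G -> G -> G) (inv : G -> G) (e : G) :=
  [/\ group_law mul inv e,
      continuous (fun p : G * G => mul p.1 p.2) &
      continuous inv].

Definition is_subgroup {G : Type} (mul : G -> G -> G) (inv : G -> G) (e : G)
  (H : set G) :=
  [/\ H e, (forall x y, H x -> H y -> H (mul x y)) & (forall x, H x -> H (inv x))].

Definition open_subgroup {G : topologicalType} (mul : G -> G -> G)
  (inv : G -> G) (e : G) (H : set G) :=
  is_subgroup mul inv e H /\ open H.

Definition double_coset {G : Type} (mul : G -> G -> G) (U V : set G) (x : G) : set G :=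
  [set g | exists u v, U u /\ V v /\ g = mul (mul u x) v].

Definition double_coset_space {G : Type} (mul : G -> G -> G) (U V : set G) : set (set G) :=
  [set D | exists x, D = double_coset mul U V x].

Definition non_archimedean {G : topologicalType} (mul : G -> G -> G)
  (inv : G -> G) (e : G) :=
  forall N : set G, nbhs e N -> exists H, open_subgroup mul inv e H /\ H `<=` N.

Definition roelcke_precompact {G : topologicalType} (mul : G -> G -> G)
  (inv : G -> G) (e : G) :=
  forall U V : set G, open_subgroup mul inv e U -> open_subgroup mul inv e V ->
    finite_set (double_coset_space mul U V).

Definition pro_oligomorphic {G : topologicalType} (mul : G -> G -> G)
  (inv : G -> G) (e : G) :=
  [/\ topological_group mul inv e, hausdorff_space G,
      non_archimedean mul inv e & roelcke_precompact mul inv e].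

Definition strict_subgroup_chain {G : Type} (mul : G -> G -> G) (inv : G -> G)
  (e : G) (U : set G) (n : nat) (C : nat -> set G) :=
  [/\ C 0%N = U,
      (forall i, (i <= n)%N -> is_subgroup mul inv e (C i)) &
      (forall i, (i < n)%N -> C i `<` C i.+1)].

From mathcomp Require Import all_boot all_order.
From mathcomp Require Import all_classical all_analysis.
Local Open Scope classical_set_scope.
Local Open Scope card_scope.

(** Every subgroup [H] containing [U] is a union of double cosets [UxU].  A
    strict chain [U = U_0 ⊊ ... ⊊ U_n] therefore induces a strict chain of
    nonempty sets of double cosets (those contained in [U_i]), so [n] is less
    than the number of double cosets, which is finite by Roelcke precompactness. *)

Lemma proper_chain_lt_card (T : finType) (S : nat -> {set T}) (n : nat) :
  S 0 != finset.set0 -> (forall i, (i < n)%N -> S i \proper S i.+1) -> (n < #|T|)%N.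
Proof.
move=> S0 Sproper.
suff lt_card i : (i <= n)%N -> (i < #|S i|)%N.
  exact: leq_trans (lt_card n (leqnn n)) (max_card _).
elim: i => [_|i IHi lt_in]; first by rewrite card_gt0.
exact: leq_ltn_trans (IHi (ltnW lt_in)) (proper_card (Sproper i lt_in)).
Qed.

Definition saturated {T : Type} (B : T -> set T) (A : set T) :=
  forall x, A x -> B x `<=` A.

Section SaturatedChains.
Context {T : Type} {B : T -> set T}.
Hypothesis mem_block : forall x, B x x.

Lemma saturated_chain_lt {N n : nat} {A : nat -> set T} :
  [set D | exists x, D = B x] #= `I_N ->
  A 0 !=set0 ->
  (forall i, (i <= n)%N -> saturated B (A i)) ->
  (forall i, (i < n)%N -> A i `<` A i.+1) ->
  (n < N)%N.
Proof.
rewrite card_eq_sym => /card_set_bijP[f [_ _ f_surj]] [x0 Ax0] Asat Aproper.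
have block_index x : exists k : 'I_N, f k = B x.
  have [k /= lt_kN fk] := f_surj (B x) (ex_intro _ x erefl).
  by exists (Ordinal lt_kN).
pose S i := finset (fun k : 'I_N => `[< f k `<=` A i >]%type).
rewrite -[N]card_ord; apply: (@proper_chain_lt_card _ S).
  apply/finset.set0Pn; have [k fk] := block_index x0; exists k.
  by rewrite inE fk; apply/asboolP; exact: Asat (leq0n n) _ Ax0.
move=> i lt_in; have [sub_A nsub_A] := Aproper i lt_in.
apply/fintype.properP; split.
  apply/fintype.subsetP => k; rewrite !inE => fk_sub.
  by move=> y /fk_sub /sub_A.
have /existsNP[x /not_implyP[Ax nAx]] := nsub_A.
have [k fk] := block_index x; exists k; rewrite !inE fk.
  exact: Asat lt_in _ Ax.
by apply/asboolPn => Bx_sub; apply/nAx/Bx_sub.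
Qed.

End SaturatedChains.

Section DoubleCosets.
Context {G : Type} {mul : G -> G -> G} {inv : G -> G} {e : G} {U : set G}.

Lemma double_coset_refl : group_law mul inv e -> U e ->
  forall x, double_coset mul U U x x.
Proof.
move=> [_ mul_e _] Ue x; exists e, e; split=> //; split=> //.
by have [-> _] := mul_e x; have [_ ->] := mul_e x.
Qed.

Lemma subgroup_saturated (H : set G) : is_subgroup mul inv e H -> U `<=` H ->
  saturated (double_coset mul U U) H.
Proof.
move=> [_ H_mul _] sub_UH x Hx y [u [v [Uu [Uv ->]]]].
by apply: (H_mul); [apply: (H_mul) => //|]; apply: sub_UH.
Qed.

Lemma subgroup_chain_ge {n : nat} {C : nat -> set G} :
  strict_subgroup_chain mul inv e U n C -> forall i, (i <= n)%N -> U `<=` C i.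
Proof.
move=> [C0 _ Cproper]; elim=> [_|i IHi lt_in]; first by rewrite C0.
by apply: subset_trans (IHi (ltnW lt_in)) _; have [] := Cproper i lt_in.
Qed.

End DoubleCosets.

Theorem proposition5p1 (G : topologicalType) (mul : G -> G -> G) (inv : G -> G)
  (e : G) (U : set G) :
  pro_oligomorphic mul inv e -> open_subgroup mul inv e U ->
  exists N : nat,
    double_coset_space mul U U #= `I_N /\
    (forall (n : nat) (C : nat -> set G),
        strict_subgroup_chain mul inv e U n C -> (n <= N)%N).
Proof.
move=> [[glaw _ _] _ _ roelcke] oU.
have [N cardN] := roelcke U U oU oU.
exists N; split=> // n C chainC.
have [[Ue _ _] _] := oU.
have [C0 Csub Cproper] := chainC.
apply/ltnW/(saturated_chain_lt (double_coset_refl glaw Ue) cardN _ _ Cproper).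
- by exists e; rewrite C0.
- move=> i le_in; apply: subgroup_saturated (Csub i le_in) _.
  exact: subgroup_chain_ge chainC i le_in.
Qed.
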